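(* Let $\mathbf A=(A;\cdot,\to,\leadsto,1)$ be a pseudo-hoop and let $x,y\in A$ be such that $x\vee y=1$. Then $x\cdot y=x\wedge y=y\cdot x$ and $x\to y=x\leadsto y=y$.
   Context: A pseudo-hoop is an algebra $(A;\cdot,\to,\leadsto,1)$ of type $\langle 2,2,2,0\rangle$ such that for all $x,y,z\in A$: $x\cdot 1=x=1\cdot x$; $x\to x=1=x\leadsto x$; $(x\cdot y)\to z=x\to(y\to z)$; $(x\cdot y)\leadsto z=y\leadsto(x\leadsto z)$; and $(x\to y)\cdot x=(y\to x)\cdot y=x\cdot(x\leadsto y)=y\cdot(y\leadsto x)$. Setting $x\le y$ iff $x\to y=1$ gives a partial order with greatest element $1$ in which $x\wedge y=(x\to y)\cdot x$. ''$x\vee y=1$'' means the supremum of $\{x,y\}$ exists and equals $1$. *)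

Record pseudo_hoop (A : Type) (mul imp1 imp2 : A -> A -> A) (one : A) : Prop := {
  ph_mul1r : forall x, mul x one = x;
  ph_mul1l : forall x, mul one x = x;
  ph_imp1_refl : forall x, imp1 x x = one;
  ph_imp2_refl : forall x, imp2 x x = one;
  ph_imp1_mul : forall x y z, imp1 (mul x y) z = imp1 x (imp1 y z);
  ph_imp2_mul : forall x y z, imp2 (mul x y) z = imp2 y (imp2 x z);
  ph_div1 : forall x y, mul (imp1 x y) x = mul (imp1 y x) y;
  ph_div2 : forall x y, mul (imp1 y x) y = mul x (imp2 x y);
  ph_div3 : forall x y, mul x (imp2 x y) = mul y (imp2 y x)
}.

Definition ph_le {A : Type} (imp1 : A -> A -> A) (one : A) (x y : A) : Prop :=
  imp1 x y = one.

Definition ph_meet {A : Type} (mul imp1 : A -> A -> A) (x y : A) : A :=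
  mul (imp1 x y) x.

Definition ph_is_sup {A : Type} (imp1 : A -> A -> A) (one : A) (x y s : A) : Prop :=
  ph_le imp1 one x s /\ ph_le imp1 one y s /\
  (forall u, ph_le imp1 one x u -> ph_le imp1 one y u -> ph_le imp1 one s u).

(* Products are below both factors, so [y <= x -> y] always holds, while both [x]
   and [y] lie below [(x -> y) ~> y] because [(x -> y) . x = (y -> x) . y]; when
   [x] and [y] have no upper bound other than [1] this forces [(x -> y) ~> y = 1],
   i.e. [x -> y = y], and symmetrically [x ~> y = y].  The divisibility identities
   then rewrite [x . y = x . (x ~> y)] into [(x -> y) . x = y . x]. *)

From Stdlib Require Import Setoid.

#[local] Arguments ph_mul1r {A mul imp1 imp2 one}.
#[local] Arguments ph_mul1l {A mul imp1 imp2 one}.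
#[local] Arguments ph_imp1_refl {A mul imp1 imp2 one}.
#[local] Arguments ph_imp2_refl {A mul imp1 imp2 one}.
#[local] Arguments ph_imp1_mul {A mul imp1 imp2 one}.
#[local] Arguments ph_imp2_mul {A mul imp1 imp2 one}.
#[local] Arguments ph_div1 {A mul imp1 imp2 one}.
#[local] Arguments ph_div2 {A mul imp1 imp2 one}.
#[local] Arguments ph_div3 {A mul imp1 imp2 one}.

Section PseudoHoop.

Context {A : Type} {mul imp1 imp2 : A -> A -> A} {one : A}.
Hypothesis H : pseudo_hoop A mul imp1 imp2 one.

Local Notation "a ≤ b" := (ph_le imp1 one a b) (at level 70).

Lemma ph_le_anti a b : a ≤ b -> b ≤ a -> a = b.
Proof.
  unfold ph_le; intros ab ba.
  pose proof (ph_div1 H a b) as E.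
  rewrite ab, ba, !(ph_mul1l H) in E; exact E.
Qed.

Lemma ph_imp2_anti a b : imp2 a b = one -> imp2 b a = one -> a = b.
Proof.
  intros ab ba.
  pose proof (ph_div3 H a b) as E.
  rewrite ab, ba, !(ph_mul1r H) in E; exact E.
Qed.

Lemma ph_mulA a b c : mul (mul a b) c = mul a (mul b c).
Proof.
  assert (same_imp1 : forall w, imp1 (mul (mul a b) c) w = imp1 (mul a (mul b c)) w)
    by (intro w; rewrite !(ph_imp1_mul H); reflexivity).
  apply ph_le_anti; unfold ph_le.
  - rewrite same_imp1; apply (ph_imp1_refl H).
  - rewrite <- same_imp1; apply (ph_imp1_refl H).
Qed.

(* With [d := a -> 1], both [1 -> a] and [(1 -> a) -> a] are expressed through [d]
   ([d . a] and [d -> 1]), and the divisibility identity for [1 -> a] and [a]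
   collapses to [1 -> a = a]. *)
Lemma ph_imp1_1l a : imp1 one a = a.
Proof.
  set (d := imp1 a one).
  assert (one_imp_d : imp1 one d = d)
    by (unfold d; rewrite <- (ph_imp1_mul H), (ph_mul1l H); reflexivity).
  assert (d_idem : mul (imp1 d one) d = d)
    by (rewrite (ph_div1 H), (ph_mul1r H); exact one_imp_d).
  assert (one_imp_a : imp1 one a = mul d a)
    by (unfold d; rewrite (ph_div1 H), (ph_mul1r H); reflexivity).
  assert (a_le : imp1 a (imp1 one a) = one)
    by (rewrite <- (ph_imp1_mul H), (ph_mul1r H), (ph_imp1_refl H); reflexivity).
  assert (back : imp1 (imp1 one a) a = imp1 d one)
    by (rewrite one_imp_a, (ph_imp1_mul H), (ph_imp1_refl H); reflexivity).
  pose proof (ph_div1 H (imp1 one a) a) as E.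
  rewrite a_le, (ph_mul1l H), back, one_imp_a, <- ph_mulA, d_idem in E.
  rewrite one_imp_a; exact E.
Qed.

Lemma ph_1le_eq1 b : one ≤ b -> b = one.
Proof. unfold ph_le; intro h; rewrite <- h; symmetry; apply ph_imp1_1l. Qed.

Lemma ph_imp1_1r a : imp1 a one = one.
Proof.
  pose proof (ph_div1 H a one) as E.
  rewrite (ph_mul1r H), ph_imp1_1l in E.
  rewrite <- E at 1; rewrite (ph_imp1_mul H), (ph_imp1_refl H); reflexivity.
Qed.

Lemma ph_imp2_1r a : imp2 a one = one.
Proof.
  pose proof (ph_div2 H a one) as E.
  rewrite (ph_mul1r H), ph_imp1_1l in E.
  rewrite E at 1; rewrite (ph_imp2_mul H), (ph_imp2_refl H); reflexivity.
Qed.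

Lemma ph_leE2 a b : a ≤ b <-> imp2 a b = one.
Proof.
  unfold ph_le.
  pose proof (eq_trans (ph_div1 H a b) (ph_div2 H a b)) as E.
  split; intro h.
  - rewrite h, (ph_mul1l H) in E.
    rewrite E at 1; rewrite (ph_imp2_mul H), (ph_imp2_refl H); reflexivity.
  - rewrite h, (ph_mul1r H) in E.
    rewrite <- E at 1; rewrite (ph_imp1_mul H), (ph_imp1_refl H); reflexivity.
Qed.

Lemma ph_mul_le_r a b : mul a b ≤ b.
Proof.
  unfold ph_le; rewrite (ph_imp1_mul H), (ph_imp1_refl H); apply ph_imp1_1r.
Qed.

Lemma ph_mul_le_l a b : mul a b ≤ a.
Proof.
  apply ph_leE2; rewrite (ph_imp2_mul H), (ph_imp2_refl H); apply ph_imp2_1r.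
Qed.

Section JoinOne.

Context {x y : A}.
Hypothesis join_one : forall u, x ≤ u -> y ≤ u -> one ≤ u.

Lemma ph_imp1_join1 : imp1 x y = y.
Proof.
  apply ph_le_anti.
  - apply ph_leE2, ph_1le_eq1, join_one; apply ph_leE2; rewrite <- (ph_imp2_mul H).
    + rewrite (ph_div1 H); apply ph_leE2, ph_mul_le_r.
    + apply ph_leE2, ph_mul_le_r.
  - unfold ph_le; rewrite <- (ph_imp1_mul H); apply ph_mul_le_l.
Qed.

Lemma ph_imp2_join1 : imp2 x y = y.
Proof.
  apply ph_imp2_anti.
  - apply ph_leE2, ph_1le_eq1, join_one; unfold ph_le; rewrite <- (ph_imp1_mul H).
    + rewrite <- (ph_div2 H); apply ph_mul_le_r.
    + apply ph_mul_le_l.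
  - rewrite <- (ph_imp2_mul H); apply ph_leE2, ph_mul_le_r.
Qed.

Lemma ph_mul_join1 : mul x y = mul y x.
Proof.
  rewrite <- ph_imp2_join1 at 1.
  rewrite <- (ph_div2 H), <- (ph_div1 H), ph_imp1_join1; reflexivity.
Qed.

End JoinOne.

End PseudoHoop.

Theorem lemma4p1 (A : Type) (mul imp1 imp2 : A -> A -> A) (one : A)
  (H : @pseudo_hoop A mul imp1 imp2 one) (x y : A)
  (Hsup : ph_is_sup imp1 one x y one) :
  mul x y = ph_meet mul imp1 x y /\ ph_meet mul imp1 x y = mul y x /\
  imp1 x y = imp2 x y /\ imp2 x y = y.
Proof.
  destruct Hsup as [_ [_ join_one]].
  unfold ph_meet.
  rewrite (ph_imp1_join1 H join_one), (ph_imp2_join1 H join_one).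
  rewrite (ph_mul_join1 H join_one).
  repeat split.
Qed.
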